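(* Let $n\ge2$, $q=2^m$, and let $\mathbf{H}_X^{(q)}$, $\mathbf{H}_Z^{(q)}$ be $q$-ary labelings of the toric Tanner graphs $\mathcal{G}_X$, $\mathcal{G}_Z$ (as defined in the context) with codes $\mathcal{C}_X^{(q)}$, $\mathcal{C}_Z^{(q)}$, such that $(\mathcal{C}_Z^{(q)})^\perp\subset\mathcal{C}_X^{(q)}$ and every cycle of the labeled graph $\mathcal{G}_X$ has product $1$. Then $$\min\{|x| : x\in\mathcal{C}_X^{(q)}\setminus(\mathcal{C}_Z^{(q)})^\perp\}=\min\{|x| : x\in\mathcal{C}_Z^{(q)}\setminus(\mathcal{C}_X^{(q)})^\perp\}=n,$$ where $|x|$ is the Hamming weight.
   Context: Indices are taken in $\mathbb{Z}_{2n}=\{0,\dots,2n-1\}$ with arithmetic mod $2n$. Variable nodes: $V=\{(i,j)\in\mathbb{Z}_{2n}^2: i+j\text{ even}\}$. $X$-check nodes: $C_X=\{(i,j): i\text{ odd}, j\text{ even}\}$; $Z$-check nodes: $C_Z=\{(i,j): i\text{ even}, j\text{ odd}\}$. Each check node $(i,j)$ is adjacent to the four variable nodes $(i\pm1,j)$, $(i,j\pm1)$. $\mathcal{G}_X$ is the bipartite graph on $V\cup C_X$ and $\mathcal{G}_Z$ on $V\cup C_Z$. A $q$-ary labeling is a matrix $\mathbf{H}_X^{(q)}=(x_{c,v})\in\mathbb{F}_q^{C_X\times V}$ with $x_{c,v}\neq0$ iff $c,v$ adjacent, and similarly $\mathbf{H}_Z^{(q)}=(z_{c,v})\in\mathbb{F}_q^{C_Z\times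 V}$. $\mathcal{C}_X^{(q)}=\ker\mathbf{H}_X^{(q)}\subset\mathbb{F}_q^V$, $\mathcal{C}_Z^{(q)}=\ker\mathbf{H}_Z^{(q)}$, and $\perp$ is with respect to the standard bilinear form on $\mathbb{F}_q^V$. For a cycle $v_1,c_1,v_2,\dots,v_k,c_k,v_1$ of labeled $\mathcal{G}_X$ its product is $\prod_{t=1}^k x_{c_t v_{t+1}}x_{c_t v_t}^{-1}$ (indices of $v$ mod $k$). *)

From HB Require Import structures.
From mathcomp Require Import all_boot all_order all_algebra.
Set Implicit Arguments. Unset Strict Implicit. Unset Printing Implicit Defensive.
Import GRing.Theory.
Local Open Scope ring_scope.

Notation pos n := ('I_(2 * n) * 'I_(2 * n))%type.

Definition Vnode (n : nat) := {p : pos n | ~~ odd (p.1 + p.2)}.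
HB.instance Definition _ n := Finite.on (Vnode n).
Definition CXnode (n : nat) := {p : pos n | odd p.1 && ~~ odd p.2}.
HB.instance Definition _ n := Finite.on (CXnode n).
Definition CZnode (n : nat) := {p : pos n | ~~ odd p.1 && odd p.2}.
HB.instance Definition _ n := Finite.on (CZnode n).

Definition grid_adj (n : nat) (c v : pos n) : bool :=
  let N := (2 * n)%N in
  [|| ((v.1 : nat) == (c.1 + 1) %% N)%N && (v.2 == c.2),
      ((c.1 : nat) == (v.1 + 1) %% N)%N && (v.2 == c.2),
      (v.1 == c.1) && ((v.2 : nat) == (c.2 + 1) %% N)%N
    | (v.1 == c.1) && ((c.2 : nat) == (v.2 + 1) %% N)%N ].

Definition is_labeling (n : nat) (C : finType) (cpos : C -> pos n)
  (F : fieldType) (H : C -> Vnode n -> F) : Prop :=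
  forall c v, (H c v != 0) = grid_adj (cpos c) (val v).

Definition code (n : nat) (C : finType) (F : finFieldType) (H : C -> Vnode n -> F)
  : {set {ffun Vnode n -> F}} :=
  [set x : {ffun Vnode n -> F} | [forall c, \sum_v H c v * x v == 0]].

Definition dual (n : nat) (F : finFieldType) (S : {set {ffun Vnode n -> F}})
  : {set {ffun Vnode n -> F}} :=
  [set y : {ffun Vnode n -> F} | [forall x in S, \sum_v x v * y v == 0]].

Definition wt (n : nat) (F : fieldType) (x : {ffun Vnode n -> F}) : nat :=
  #|[set v : Vnode n | x v != 0]|.

Definition cycles_product_one (n : nat) (C : finType) (cpos : C -> pos n)
  (F : fieldType) (H : C -> Vnode n -> F) : Prop :=
  forall (k : nat) (vs : 'I_k -> Vnode n) (cs : 'I_k -> C),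
    (2 <= k)%N -> injective vs -> injective cs ->
    (forall t, grid_adj (cpos (cs t)) (val (vs t))) ->
    (forall t, grid_adj (cpos (cs t)) (val (vs (ordS t)))) ->
    \prod_(t < k) (H (cs t) (vs (ordS t)) / H (cs t) (vs t)) = 1.

Definition cxpos (n : nat) (c : CXnode n) : pos n := val c.
Definition czpos (n : nat) (c : CZnode n) : pos n := val c.

(* The X-checks, at positions (odd, even), are the vertices of an n x n grid on
   the torus, the variables are its edges and the Z-checks, at (even, odd), its
   faces; transposing the coordinates exchanges the two kinds of checks, so both
   halves of the statement follow from one argument run in two frames.
   A codeword s of C_X of weight < n misses a whole row of horizontal edges and a
   whole column of vertical edges.  Given w in C_Z, subtract from w a combination
   of rows of H_X chosen along a spanning tree of the torus cut open along these
   two lines: the face equations of w and the orthogonality of H_X and H_Z force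
   the result to be supported on the two lines, where s vanishes, so s.w = 0 and
   s lies in the dual of C_Z.
   Conversely, the word along a row of horizontal edges whose consecutive values
   are in the ratio of the labels of the check between them lies in C_X in
   characteristic 2, and closes up because the cycle product along the row is 1;
   for H_Z the product along a column reduces, by orthogonality, to an X-cycle
   product.  The two words meet in a single variable, so their inner product is 1
   and neither lies in the dual of the other code. *)

From HB Require Import structures.
From mathcomp Require Import all_boot all_order all_algebra all_field zify ring.
Set Implicit Arguments. Unset Strict Implicit. Unset Printing Implicit Defensive.
Import GRing.Theory.

Lemma eqn_mod_double n x y :
  (x == y %[mod 2 * n]) = (odd x == odd y) && (x./2 == y./2 %[mod n]).
Proof.
rewrite -{1}(odd_double_half x) -{1}(odd_double_half y) -!mul2n.
have odd_neq (b : nat) c : (1 + 2 * b == 2 * c %[mod 2 * n]) = false.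
  apply/negbTE/negP => /eqP /(congr1 odd).
  by rewrite !odd_mod ?mul2n ?oddD ?odd_double.
case: (odd x); case: (odd y) => /=.
- by rewrite eqn_modDl -!muln_modr eqn_pmul2l.
- by rewrite add0n odd_neq.
- by rewrite add0n eq_sym odd_neq.
- by rewrite !add0n -!muln_modr eqn_pmul2l.
Qed.

Lemma eqn_modS m p d : (m.+1 == p.+1 %[mod d]) = (m == p %[mod d]).
Proof. by rewrite -addn1 -[p.+1]addn1 eqn_modDr. Qed.

Lemma eqn_modSr d b : 1 < d -> (b == b.+1 %[mod d]) = false.
Proof.
by move=> d_gt1; rewrite -addn1 -{1}[b]addn0 eqn_modDl !modn_small // ltnW.
Qed.

Lemma eqn_modDl_small d a i j : i < d -> j < d -> (a + i == a + j %[mod d]) -> i = j.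
Proof. by move=> ltid ltjd; rewrite eqn_modDl !modn_small // => /eqP. Qed.

Lemma exists_mod_offset d a u : 0 < d -> exists2 i, i < d & (a + i == u %[mod d]).
Proof.
move=> d_gt0; exists ((u + (d - 1) * a) %% d); first exact: ltn_pmod.
rewrite modnDmr.
have -> : a + (u + (d - 1) * a) = a * d + u by rewrite mulnBl mul1n; nia.
by rewrite modnMDl.
Qed.

Lemma half_mod_double n k r : r < 2 -> ((2 * k + r) %% (2 * n))./2 = k %% n.
Proof.
move=> r_lt2; have halfE m : (2 * m + r)./2 = m.
  rewrite mul2n addnC; case: r r_lt2 => [|[|//]] _; first exact: doubleK.
  exact: half_bit_double true.
case: (posnP n) => [->|n_gt0]; first by rewrite muln0 !modn0.
rewrite -modnDml -muln_modr modn_small ?halfE //.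
by have := ltn_pmod k n_gt0; lia.
Qed.

(* Reduce congruences mod [2 n] between affine expressions in [2 a], [2 a + 1]
   to congruences mod [n] between their halves. *)
Ltac mod_simpl := rewrite ?eqn_mod_double ?mul2n /= ?oddD ?odd_double ?halfD ?oddD
  ?odd_double ?doubleK ?doubleS /= ?add0n ?addn0 ?add1n ?addn1 ?addnS ?addSn ?eqn_modS.
Ltac mod_cases := by do ![case/orP | case/andP | move/eqP => -> | move/eqP => <-];
  rewrite /= ?eqxx ?orbT.

Section Torus.

Variable n : nat.
Hypothesis n_gt1 : 1 < n.

Lemma torus_size_gt0 : 0 < 2 * n.
Proof. by rewrite muln_gt0 (ltnW n_gt1). Qed.

Definition ord_mod (k : nat) : 'I_(2 * n) := Ordinal (ltn_pmod k torus_size_gt0).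

Lemma ord_mod_eq k l : (ord_mod k == ord_mod l) = (k == l %[mod 2 * n]).
Proof. by []. Qed.

(* The position with coordinates [(x, y)] mod [2 n] in the frame [tr]; the frame
   [true] transposes the grid, which exchanges X- and Z-check positions. *)
Definition gpos (tr : bool) (x y : nat) : pos n :=
  if tr then (ord_mod y, ord_mod x) else (ord_mod x, ord_mod y).

Definition xcoord (tr : bool) (p : pos n) : nat := if tr then p.2 else p.1.
Definition ycoord (tr : bool) (p : pos n) : nat := if tr then p.1 else p.2.

Lemma gpos_transpose x y : gpos true x y = gpos false y x.
Proof. by []. Qed.

Lemma gpos_eq tr x y x' y' :
  (gpos tr x y == gpos tr x' y') = (x == x' %[mod 2 * n]) && (y == y' %[mod 2 * n]).
Proof. by case: tr; rewrite /gpos xpair_eqE // andbC. Qed.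

Lemma gpos_coords tr (p : pos n) : p = gpos tr (xcoord tr p) (ycoord tr p).
Proof.
case: p => x y; rewrite /gpos /xcoord /ycoord.
by case: tr => /=; congr pair; apply: val_inj; rewrite /= modn_small.
Qed.

Lemma odd_gpos tr x y :
  odd (gpos tr x y).1 = odd (if tr then y else x) /\
  odd (gpos tr x y).2 = odd (if tr then x else y).
Proof. by case: tr; rewrite /= !odd_mod // mul2n odd_double. Qed.

Lemma grid_adj_gpos tr x y x' y' :
  grid_adj (gpos tr x y) (gpos tr x' y') =
  [|| (x' == x + 1 %[mod 2 * n]) && (y' == y %[mod 2 * n]),
      (x == x' + 1 %[mod 2 * n]) && (y' == y %[mod 2 * n]),
      (x' == x %[mod 2 * n]) && (y' == y + 1 %[mod 2 * n])
    | (x' == x %[mod 2 * n]) && (y == y' + 1 %[mod 2 * n])].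
Proof.
rewrite /grid_adj /gpos; case: tr => /=; rewrite !modnDml !ord_mod_eq //.
set A := (y' == _ %[mod _]); set B := (y == _ %[mod _]); set C := (x' == x %[mod _]).
set D := (y' == y %[mod _]); set E := (x' == _ %[mod _]); set G := (x == _ %[mod _]).
by case: A; case: B; case: C; case: D; case: E; case: G.
Qed.

Section Frame.

Variable tr : bool.

(* In the frame [tr] the checks at [vtx a b] are the vertices of an [n x n]
   toric grid, the variables [hedge a b] and [vedge a b] its horizontal and
   vertical edges, and the checks at [face a b] its faces. *)
Definition vtx a b := gpos tr (2 * a + 1) (2 * b).
Definition hedge a b := gpos tr (2 * a + 1) (2 * b + 1).
Definition vedge a b := gpos tr (2 * a + 2) (2 * b).
Definition face a b := gpos tr (2 * a + 2) (2 * b + 1).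

Lemma vtx_eq a b a' b' :
  (vtx a b == vtx a' b') = (a == a' %[mod n]) && (b == b' %[mod n]).
Proof. by rewrite /vtx gpos_eq; mod_simpl. Qed.

Lemma hedge_eq a b a' b' :
  (hedge a b == hedge a' b') = (a == a' %[mod n]) && (b == b' %[mod n]).
Proof. by rewrite /hedge gpos_eq; mod_simpl. Qed.

Lemma vedge_eq a b a' b' :
  (vedge a b == vedge a' b') = (a == a' %[mod n]) && (b == b' %[mod n]).
Proof. by rewrite /vedge gpos_eq; mod_simpl. Qed.

Lemma hedge_neq_vedge a b a' b' : hedge a b != vedge a' b'.
Proof. by rewrite /hedge /vedge gpos_eq; mod_simpl. Qed.

Lemma gpos_modl x y k : gpos tr (2 * (x %% n) + k) y = gpos tr (2 * x + k) y.
Proof. by apply/eqP; rewrite gpos_eq eqxx andbT eqn_modDr muln_modr modn_mod. Qed.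

Lemma gpos_modr x y k : gpos tr x (2 * (y %% n) + k) = gpos tr x (2 * y + k).
Proof. by apply/eqP; rewrite gpos_eq eqn_modDr muln_modr modn_mod !eqxx. Qed.

Lemma vtx_modl a b : vtx (a %% n) b = vtx a b.
Proof. exact: gpos_modl. Qed.

Lemma hedge_modl a b : hedge (a %% n) b = hedge a b.
Proof. exact: gpos_modl. Qed.

Lemma hedge_modr a b : hedge a (b %% n) = hedge a b.
Proof. exact: gpos_modr. Qed.

Lemma vedge_modl a b : vedge (a %% n) b = vedge a b.
Proof. exact: gpos_modl. Qed.

Lemma hedge_adj_vtx a b a' b' :
  grid_adj (vtx a' b') (hedge a b) -> (vtx a' b' == vtx a b) || (vtx a' b' == vtx a b.+1).
Proof. rewrite /vtx /hedge grid_adj_gpos !gpos_eq; mod_simpl; mod_cases. Qed.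

Lemma vedge_adj_vtx a b a' b' :
  grid_adj (vtx a' b') (vedge a b) -> (vtx a' b' == vtx a b) || (vtx a' b' == vtx a.+1 b).
Proof. rewrite /vtx /vedge grid_adj_gpos !gpos_eq; mod_simpl; mod_cases. Qed.

Lemma face_adj a b p : grid_adj (face a b) p ->
  [|| p == hedge a b, p == hedge a.+1 b, p == vedge a b | p == vedge a b.+1].
Proof.
rewrite [p](gpos_coords tr); move: (xcoord _ _) (ycoord _ _) => x y.
rewrite -(odd_double_half x) -(odd_double_half y) -!mul2n ![odd _ + _]addnC.
move: (odd x) (odd y) x./2 y./2 => [] [] i j;
  rewrite /face /hedge /vedge grid_adj_gpos !gpos_eq; mod_simpl; mod_cases.
Qed.

Lemma vtx_adj_edges a b :
  [/\ grid_adj (vtx a b) (hedge a b), grid_adj (vtx a b.+1) (hedge a b),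
      grid_adj (vtx a b) (vedge a b) & grid_adj (vtx a.+1 b) (vedge a b)].
Proof.
by split; rewrite /vtx /hedge /vedge grid_adj_gpos; mod_simpl; rewrite ?eqxx ?orbT.
Qed.

Lemma face_adj_edges a b :
  [/\ grid_adj (face a b) (hedge a b), grid_adj (face a b) (hedge a.+1 b),
      grid_adj (face a b) (vedge a b) & grid_adj (face a b) (vedge a b.+1)].
Proof.
by split; rewrite /face /hedge /vedge grid_adj_gpos; mod_simpl; rewrite ?eqxx ?orbT.
Qed.

Lemma vtx_face_common a b p : grid_adj (vtx a b) p -> grid_adj (face a b) p ->
  (p == hedge a b) || (p == vedge a b).
Proof.
move=> adj /face_adj /or4P [] /eqP pE; rewrite pE ?eqxx ?orbT //; move: adj;
  rewrite pE /vtx /hedge /vedge grid_adj_gpos; mod_simpl;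
  by rewrite ?eqn_modSr // ?[(_.+1 == _ %[mod n])]eq_sym ?eqn_modSr ?andbF.
Qed.

Lemma vtxS_face_common a b p : grid_adj (vtx a.+1 b) p -> grid_adj (face a b) p ->
  (p == hedge a.+1 b) || (p == vedge a b).
Proof.
move=> adj /face_adj /or4P [] /eqP pE; rewrite pE ?eqxx ?orbT //; move: adj;
  rewrite pE /vtx /hedge /vedge grid_adj_gpos; mod_simpl;
  by rewrite ?eqn_modSr // ?[(_.+1 == _ %[mod n])]eq_sym ?eqn_modSr ?andbF.
Qed.

Lemma vtx_neqS a b : (vtx a b != vtx a b.+1) && (vtx a b != vtx a.+1 b).
Proof. by rewrite /vtx !gpos_eq; mod_simpl; rewrite !eqn_modSr ?andbF. Qed.

Lemma odd_gpos_sum x y : odd ((gpos tr x y).1 + (gpos tr x y).2) = odd (x + y).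
Proof.
have odd2n : odd (2 * n) = false by rewrite mul2n odd_double.
by case: tr; rewrite /= !oddD !odd_mod // addbC.
Qed.

Lemma hedge_even a b : ~~ odd ((hedge a b).1 + (hedge a b).2).
Proof. by rewrite odd_gpos_sum !mul2n !oddD !odd_double. Qed.

Lemma vedge_even a b : ~~ odd ((vedge a b).1 + (vedge a b).2).
Proof. by rewrite odd_gpos_sum !mul2n !oddD !odd_double. Qed.

Definition hedgeV a b : Vnode n :=
  @exist (pos n) (fun p => ~~ odd (p.1 + p.2)) _ (hedge_even a b).
Definition vedgeV a b : Vnode n :=
  @exist (pos n) (fun p => ~~ odd (p.1 + p.2)) _ (vedge_even a b).

Lemma hedgeV0_eq (k k' : 'I_n) : (hedgeV 0 k == hedgeV 0 k') = (k == k').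
Proof. by rewrite -val_eqE hedge_eq eqxx /= !modn_small. Qed.

Lemma hedgeV_modl a b : hedgeV (a %% n) b = hedgeV a b.
Proof. by apply: val_inj; exact: hedge_modl. Qed.

Lemma hedgeV_modr a b : hedgeV a (b %% n) = hedgeV a b.
Proof. by apply: val_inj; exact: hedge_modr. Qed.

Lemma vedgeV_modl a b : vedgeV (a %% n) b = vedgeV a b.
Proof. by apply: val_inj; exact: vedge_modl. Qed.

Lemma vnode_cover (e : Vnode n) a0 b0 : exists i j, [/\ i < n, j < n &
  (val e == hedge (a0 + i) (b0 + j)) || (val e == vedge (a0 + i) (b0 + j))].
Proof.
have n_gt0 : 0 < n := ltnW n_gt1.
have par : odd (xcoord tr (val e)) = odd (ycoord tr (val e)).
  by move: (valP e); rewrite /xcoord /ycoord oddD; case: tr; case: (odd _); case: (odd _).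
rewrite [val e](gpos_coords tr); move: par; move: (xcoord _ _) (ycoord _ _) => x y par.
have [j ltjn ej] := exists_mod_offset b0 y./2 n_gt0.
case ox : (odd x).
- have [i ltin ei] := exists_mod_offset a0 x./2 n_gt0.
  exists i, j; split=> //; apply/orP; left.
  by rewrite /hedge gpos_eq; mod_simpl; rewrite -par ox /= eq_sym ei eq_sym ej.
- have [i ltin ei] := exists_mod_offset a0.+1 x./2 n_gt0.
  exists i, j; split=> //; apply/orP; right.
  by rewrite /vedge gpos_eq; mod_simpl; rewrite -par ox /= eq_sym -addSn ei eq_sym ej.
Qed.

Lemma pos_is_vtx (p : pos n) :
  odd (xcoord tr p) -> ~~ odd (ycoord tr p) -> exists a b, p = vtx a b.
Proof.
move=> ox ey; exists (xcoord tr p)./2, (ycoord tr p)./2.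
rewrite {1}[p](gpos_coords tr) /vtx -{1}(odd_double_half (xcoord _ _)).
by rewrite -{1}(odd_double_half (ycoord _ _)) ox (negbTE ey) -!mul2n addnC.
Qed.

End Frame.

Lemma hedge_row_meets_col k k' :
  hedge false 0 k = hedge true 0 k' -> hedge false 0 k = hedge false 0 0.
Proof.
move/eqP; rewrite gpos_eq => /andP [_ ek].
by apply/eqP; rewrite gpos_eq eqxx.
Qed.

Lemma vtx_transpose a b : vtx true a b.+1 = face false b a.
Proof. by rewrite /vtx /face gpos_transpose mulnS addnC. Qed.

Lemma cx_vtx_subproof a b : odd (vtx false a b).1 && ~~ odd (vtx false a b).2.
Proof.
by case: (odd_gpos false (2 * a + 1) (2 * b)) => /= -> ->; rewrite !mul2n oddD !odd_double.
Qed.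

Lemma cz_face_subproof a b : ~~ odd (face false a b).1 && odd (face false a b).2.
Proof.
by case: (odd_gpos false (2 * a + 2) (2 * b + 1)) => /= -> ->; rewrite !mul2n !oddD !odd_double.
Qed.

Lemma cz_vtx_subproof a b : ~~ odd (vtx true a b).1 && odd (vtx true a b).2.
Proof.
by case: (odd_gpos true (2 * a + 1) (2 * b)) => /= -> ->; rewrite !mul2n oddD !odd_double.
Qed.

Lemma cx_face_subproof a b : odd (face true a b).1 && ~~ odd (face true a b).2.
Proof.
by case: (odd_gpos true (2 * a + 2) (2 * b + 1)) => /= -> ->; rewrite !mul2n !oddD !odd_double.
Qed.

Definition cx_vtx a b : CXnode n :=
  @exist (pos n) (fun p => odd p.1 && ~~ odd p.2) _ (cx_vtx_subproof a b).
Definition cz_face a b : CZnode n :=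
  @exist (pos n) (fun p => ~~ odd p.1 && odd p.2) _ (cz_face_subproof a b).
Definition cz_vtx a b : CZnode n :=
  @exist (pos n) (fun p => ~~ odd p.1 && odd p.2) _ (cz_vtx_subproof a b).
Definition cx_face a b : CXnode n :=
  @exist (pos n) (fun p => odd p.1 && ~~ odd p.2) _ (cx_face_subproof a b).

Lemma cx_vtx_onto (c : CXnode n) : exists a b, cxpos c = vtx false a b.
Proof. by case/andP: (valP c) => ox ey; apply: pos_is_vtx. Qed.

Lemma cz_vtx_onto (c : CZnode n) : exists a b, czpos c = vtx true a b.
Proof. by case/andP: (valP c) => ex oy; apply: pos_is_vtx. Qed.

Lemma cz_vtx_face a b : cz_vtx a b.+1 = cz_face b a.
Proof. by apply: val_inj; exact: vtx_transpose. Qed.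

Lemma hedgeV_transpose a b : hedgeV true a b = hedgeV false b a.
Proof. exact: val_inj. Qed.

End Torus.

Lemma light_word_misses_fiber n (F : fieldType) (s : {ffun Vnode n -> F})
    (f : Vnode n -> 'I_n) :
  wt s < n -> exists b, forall e, f e = b -> s e = 0%R.
Proof.
move=> wt_lt; set S := [set e | s e != 0%R].
have card_lt : #|f @: S| < n by apply: leq_ltn_trans (leq_imset_card _ _) wt_lt.
case: (pickP (fun b => b \notin f @: S)) => [b nSb | allS].
  exists b => e feb; apply/eqP; apply: contraNT nSb => se.
  by rewrite -feb; apply: imset_f; rewrite inE.
suff fS : f @: S = [set: 'I_n] by move: card_lt; rewrite fS cardsT card_ord ltnn.
by apply/setP => b; rewrite inE; move/negbFE: (allS b).
Qed.

Lemma light_word_misses_lines n (n_gt1 : 1 < n) tr (F : fieldType)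
    (s : {ffun Vnode n -> F}) : wt s < n ->
  (exists b1, forall a e, val e = hedge n_gt1 tr a b1 -> s e = 0%R) /\
  (exists a0, forall b e, val e = vedge n_gt1 tr a0 b -> s e = 0%R).
Proof.
move=> wt_lt; have n_gt0 : 0 < n := ltnW n_gt1.
split.
  have [b sb] := light_word_misses_fiber
    (fun e => Ordinal (ltn_pmod (ycoord tr (val e))./2 n_gt0)) wt_lt.
  exists b => a e eh; apply: sb; apply: val_inj => /=.
  rewrite {}eh /hedge /ycoord /gpos.
  by case: tr; rewrite /= half_mod_double // modn_mod modn_small.
have [a sa] := light_word_misses_fiber
  (fun e => Ordinal (ltn_pmod ((xcoord tr (val e))./2 + (n - 1)) n_gt0)) wt_lt.
exists a => b e ev; apply: sa; apply: val_inj => /=.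
have -> : (xcoord tr (val e))./2 = a.+1 %% n.
  rewrite {}ev /vedge /xcoord /gpos -(@half_mod_double n a.+1 0) // addn0 mulnS.
  by case: tr; rewrite /= addnC.
rewrite modnDml; have -> : a.+1 + (n - 1) = a + n by lia.
by rewrite modnDr modn_small.
Qed.

Local Open Scope ring_scope.

Lemma big_supp1 (V : nmodType) (I : finType) (g : I -> V) i0 :
  (forall i, i != i0 -> g i = 0) -> \sum_i g i = g i0.
Proof. by move=> g0; rewrite (bigD1 i0) //= big1 ?addr0. Qed.

Lemma big_supp2 (V : nmodType) (I : finType) (g : I -> V) i1 i2 : i1 != i2 ->
  (forall i, g i != 0 -> (i == i1) || (i == i2)) -> \sum_i g i = g i1 + g i2.
Proof.
move=> i12 supp; rewrite (bigD1 i1) // (bigD1 i2) /=; last by rewrite eq_sym.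
rewrite addrA big1 ?addr0 // => i /andP [ne2 ne1].
by case: (g i =P 0) => // /eqP /supp; rewrite (negbTE ne1) (negbTE ne2).
Qed.

Lemma dot_ker_image (R : comPzRingType) (C E : finType) (A : C -> E -> R)
    (s : E -> R) (phi : C -> R) :
  (forall c, \sum_e A c e * s e = 0) -> \sum_e s e * \sum_c phi c * A c e = 0.
Proof.
move=> As0; under eq_bigr do rewrite mulr_sumr.
rewrite exchange_big big1 // => c _.
have -> : \sum_e s e * (phi c * A c e) = phi c * \sum_e A c e * s e.
  by rewrite mulr_sumr; apply: eq_bigr => e _; ring.
by rewrite As0 mulr0.
Qed.

Section Labelings.

Variables (n : nat) (n_gt1 : (1 < n)%N) (tr : bool) (F : fieldType).
Local Notation vtx := (vtx n_gt1 tr).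
Local Notation hedge := (hedge n_gt1 tr).
Local Notation vedge := (vedge n_gt1 tr).
Local Notation face := (face n_gt1 tr).
Local Notation hedgeV := (hedgeV n_gt1 tr).
Local Notation vedgeV := (vedgeV n_gt1 tr).

(* [A] labels the checks at the vertices and [B] those at the faces of the frame
   [tr]: (H_X, H_Z) in the frame [false] and (H_Z, H_X) in the frame [true]. *)
Variables (C D : finType) (cpos : C -> pos n) (dpos : D -> pos n).
Variables (A : C -> Vnode n -> F) (B : D -> Vnode n -> F).
Hypotheses (A_lab : is_labeling cpos A) (B_lab : is_labeling dpos B).
Hypothesis cpos_inj : injective cpos.
Hypothesis cpos_vtx : forall c, exists a b, cpos c = vtx a b.
Variables (vtxc : nat -> nat -> C) (facec : nat -> nat -> D).
Hypothesis vtxcE : forall a b, cpos (vtxc a b) = vtx a b.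
Hypothesis facecE : forall a b, dpos (facec a b) = face a b.
Hypothesis AB_orth : forall c d, \sum_e A c e * B d e = 0.

Lemma vtxc_hedge_ends a b c :
  A c (hedgeV a b) != 0 -> (c == vtxc a b) || (c == vtxc a b.+1).
Proof.
have [a' [b' cE]] := cpos_vtx c; rewrite A_lab cE => /hedge_adj_vtx.
by rewrite -cE -!vtxcE !(inj_eq cpos_inj).
Qed.

Lemma vtxc_vedge_ends a b c :
  A c (vedgeV a b) != 0 -> (c == vtxc a b) || (c == vtxc a.+1 b).
Proof.
have [a' [b' cE]] := cpos_vtx c; rewrite A_lab cE => /vedge_adj_vtx.
by rewrite -cE -!vtxcE !(inj_eq cpos_inj).
Qed.

Lemma vtxc_neqS a b : (vtxc a b != vtxc a b.+1) && (vtxc a b != vtxc a.+1 b).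
Proof. by rewrite -!(inj_eq cpos_inj) !vtxcE vtx_neqS. Qed.

Lemma A_vtxc_edges a b :
  [/\ A (vtxc a b) (hedgeV a b) != 0, A (vtxc a b.+1) (hedgeV a b) != 0,
      A (vtxc a b) (vedgeV a b) != 0 & A (vtxc a.+1 b) (vedgeV a b) != 0].
Proof. by rewrite !A_lab !vtxcE; exact: vtx_adj_edges. Qed.

Lemma B_facec_edges a b :
  [/\ B (facec a b) (hedgeV a b) != 0, B (facec a b) (hedgeV a.+1 b) != 0,
      B (facec a b) (vedgeV a b) != 0 & B (facec a b) (vedgeV a b.+1) != 0].
Proof. by rewrite !B_lab !facecE; exact: face_adj_edges. Qed.

Lemma B_facec_support a b e : B (facec a b) e != 0 ->
  [|| e == hedgeV a b, e == hedgeV a.+1 b, e == vedgeV a b | e == vedgeV a b.+1].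
Proof. by rewrite B_lab facecE => /face_adj; rewrite -!val_eqE. Qed.

Section Gauge.

Variable w : Vnode n -> F.
Hypothesis w_closed : forall d, \sum_e B d e * w e = 0.
Variables a0 b1 : nat.

Let W i j := vtxc (a0.+1 + i) (b1.+1 + j).
Let Eh i j := hedgeV (a0.+1 + i) (b1.+1 + j).
Let Ev i j := vedgeV (a0.+1 + i) (b1.+1 + j).

(* A potential on the vertices of the grid cut open along the vertex row [a0]
   and column [b1], built along the spanning tree made of the first column and
   all the rows, so that the gauged word below vanishes on the tree. *)
Fixpoint pot_col i :=
  if i is i'.+1 then
    (w (Ev i' 0) - pot_col i' * A (W i' 0) (Ev i' 0)) / A (W i'.+1 0) (Ev i' 0)
  else 0.

Fixpoint pot i j :=
  if j is j'.+1 then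
    (w (Eh i j') - pot i j' * A (W i j') (Eh i j')) / A (W i j'.+1) (Eh i j')
  else pot_col i.

Definition gauge (c : C) : F :=
  if [pick ij : 'I_n * 'I_n | cpos c == vtx (a0.+1 + ij.1) (b1.+1 + ij.2)]
  is Some ij then pot ij.1 ij.2 else 0.

Definition gauged (e : Vnode n) : F := w e - \sum_c gauge c * A c e.

Lemma gauge_W i j : (i < n)%N -> (j < n)%N -> gauge (W i j) = pot i j.
Proof.
move=> lt_in lt_jn; rewrite /gauge; case: pickP => [[i' j'] /= | none].
  rewrite vtxcE vtx_eq => /andP [ei ej].
  by rewrite (eqn_modDl_small lt_in (ltn_ord i') ei) (eqn_modDl_small lt_jn (ltn_ord j') ej).
by have := none (Ordinal lt_in, Ordinal lt_jn); rewrite /= vtxcE eqxx.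
Qed.

Lemma gauged_hedge i j : (i < n)%N -> (j.+1 < n)%N -> gauged (Eh i j) = 0.
Proof.
move=> lt_in lt_jn; have [_ nzA _ _] := A_vtxc_edges (a0.+1 + i) (b1.+1 + j).
rewrite /gauged (@big_supp2 _ _ _ (W i j) (W i j.+1)).
- by rewrite !gauge_W ?(ltnW lt_jn) //= /W addnS divfK //; ring.
- by rewrite /W addnS; case/andP: (vtxc_neqS (a0.+1 + i) (b1.+1 + j)).
- by move=> c; rewrite mulf_eq0 negb_or /W addnS => /andP [_ /vtxc_hedge_ends].
Qed.

Lemma gauged_vedge0 i : (i.+1 < n)%N -> gauged (Ev i 0) = 0.
Proof.
move=> lt_in; have [_ _ _ nzA] := A_vtxc_edges (a0.+1 + i) (b1.+1 + 0).
rewrite /gauged (@big_supp2 _ _ _ (W i 0) (W i.+1 0)).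
- by rewrite !gauge_W ?(ltnW lt_in) ?(ltnW n_gt1) //= /W addnS divfK //; ring.
- by rewrite /W addnS; case/andP: (vtxc_neqS (a0.+1 + i) (b1.+1 + 0)).
- by move=> c; rewrite mulf_eq0 negb_or /W addnS => /andP [_ /vtxc_vedge_ends].
Qed.

Lemma gauged_closed d : \sum_e B d e * gauged e = 0.
Proof.
rewrite /gauged; under eq_bigr do rewrite mulrBr.
by rewrite sumrB w_closed (dot_ker_image _ (AB_orth^~ d)) subrr.
Qed.

Lemma gauged_vedge i j : (i.+1 < n)%N -> (j < n)%N -> gauged (Ev i j) = 0.
Proof.
elim: j => [|j IH] lt_in lt_jn; first exact: gauged_vedge0.
set d := facec (a0.+1 + i) (b1.+1 + j).
have [_ _ _ nzB] := B_facec_edges (a0.+1 + i) (b1.+1 + j).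
have := gauged_closed d.
rewrite (@big_supp1 _ _ (fun e => B d e * gauged e) (Ev i j.+1)) => [/eqP | e ne].
  by rewrite mulf_eq0 /Ev addnS (negbTE nzB) => /eqP.
case: (B d e =P 0) => [-> | /eqP /B_facec_support]; first by rewrite mul0r.
case/or4P => /eqP eE; rewrite eE.
- by rewrite gauged_hedge ?mulr0 // ltnW.
- by rewrite -addnS gauged_hedge ?mulr0.
- by rewrite IH ?mulr0 // ltnW.
- by move: ne; rewrite eE /Ev addnS eqxx.
Qed.

Lemma gauged_on_cut e : gauged e != 0 ->
  (exists a, val e = hedge a b1) \/ (exists b, val e = vedge a0 b).
Proof.
have [i [j [lt_in lt_jn]]] := vnode_cover n_gt1 tr e a0.+1 b1.+1.
case/orP => /eqP eE.
- have -> : e = Eh i j by apply: val_inj.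
  case: (ltnP j.+1 n) => [lt_j1n | le_nj1]; first by rewrite gauged_hedge ?eqxx.
  move=> _; left; exists (a0.+1 + i)%N; apply/eqP.
  rewrite /Eh /=; have -> : (b1.+1 + j = b1 + n)%N by lia.
  by rewrite -hedge_modr modnDr hedge_modr.
- have -> : e = Ev i j by apply: val_inj.
  case: (ltnP i.+1 n) => [lt_i1n | le_ni1]; first by rewrite gauged_vedge ?eqxx.
  move=> _; right; exists (b1.+1 + j)%N; apply/eqP.
  rewrite /Ev /=; have -> : (a0.+1 + i = a0 + n)%N by lia.
  by rewrite -vedge_modl modnDr vedge_modl.
Qed.

End Gauge.

Lemma vtxc_modl a b : vtxc (a %% n) b = vtxc a b.
Proof. by apply: cpos_inj; rewrite !vtxcE vtx_modl. Qed.

Lemma vtxc_facec_common a b e : A (vtxc a b) e != 0 -> B (facec a b) e != 0 ->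
  (e == hedgeV a b) || (e == vedgeV a b).
Proof. by rewrite A_lab B_lab vtxcE facecE -!val_eqE; exact: vtx_face_common. Qed.

Lemma vtxcS_facec_common a b e : A (vtxc a.+1 b) e != 0 -> B (facec a b) e != 0 ->
  (e == hedgeV a.+1 b) || (e == vedgeV a b).
Proof. by rewrite A_lab B_lab vtxcE facecE -!val_eqE; exact: vtxS_face_common. Qed.

Lemma orth_two_terms c d e1 e2 : e1 != e2 ->
  (forall e, A c e != 0 -> B d e != 0 -> (e == e1) || (e == e2)) ->
  A c e1 * B d e1 + A c e2 * B d e2 = 0.
Proof.
move=> e12 common; rewrite -(AB_orth c d) (big_supp2 e12) // => e.
by rewrite mulf_eq0 negb_or => /andP [nzA nzB]; exact: common.
Qed.

Lemma face_ratio a b :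
  B (facec a b) (hedgeV a b) / B (facec a b) (hedgeV a.+1 b) =
  A (vtxc a b) (vedgeV a b) / A (vtxc a b) (hedgeV a b) *
  (A (vtxc a.+1 b) (hedgeV a.+1 b) / A (vtxc a.+1 b) (vedgeV a b)).
Proof.
have [nzh _ _ nzv] := A_vtxc_edges a b; have [nzh' _ _ _] := A_vtxc_edges a.+1 b.
have [_ _ nzB _] := B_facec_edges a b.
have hv a' : hedgeV a' b != vedgeV a b by rewrite -val_eqE hedge_neq_vedge.
have solve (x y z t : F) : x != 0 -> x * y + z * t = 0 -> y = - (z * t) / x.
  by move=> nzx /eqP; rewrite addr_eq0 => /eqP <-; field.
rewrite (solve _ _ _ _ nzh (orth_two_terms (hv a) (@vtxc_facec_common a b))).
rewrite (solve _ _ _ _ nzh' (orth_two_terms (hv a.+1) (@vtxcS_facec_common a b))).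
by field; rewrite nzh nzh' nzv oppr_eq0 mulf_neq0.
Qed.

Lemma face_row_product_one : cycles_product_one cpos A ->
  \prod_(k < n) (B (facec k 0) (hedgeV k 0) / B (facec k 0) (hedgeV k.+1 0)) = 1.
Proof.
move=> cyc; under eq_bigr do rewrite face_ratio; rewrite big_split /=.
set X := fun k => A (vtxc k 0) (vedgeV k 0) / A (vtxc k 0) (hedgeV k 0).
have -> : \prod_(k < n) X k = \prod_(k < n) X k.+1.
  rewrite (reindex_inj (@ordS_inj n)); apply: eq_bigr => k _.
  by rewrite /X -(vtxc_modl k.+1) -[hedgeV k.+1 0]hedgeV_modl -[vedgeV k.+1 0]vedgeV_modl.
rewrite -big_split /=; under eq_bigr => k _.
  have [nzh _ _ _] := A_vtxc_edges k.+1 0.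
  rewrite /X mulrA divfK //; over.
have gS (t : 'I_n) : vedgeV (ordS t) 0 = vedgeV t.+1 0 by exact: vedgeV_modl.
under eq_bigr do rewrite -gS.
apply: (cyc n (fun t : 'I_n => vedgeV t 0) (fun t : 'I_n => vtxc t.+1 0) n_gt1).
- move=> t t' /eqP; rewrite -val_eqE vedge_eq eqxx andbT !modn_small //.
  by move/eqP/val_inj.
- move=> t t' /eqP; rewrite -(inj_eq cpos_inj) !vtxcE vtx_eq eqxx andbT eqn_modS.
  by rewrite !modn_small // => /eqP /val_inj.
- by move=> t; rewrite vtxcE; case: (vtx_adj_edges n_gt1 tr t 0).
- by move=> t; rewrite vtxcE gS; case: (vtx_adj_edges n_gt1 tr t.+1 0).
Qed.

Lemma dot_eq0_of_cut (s w : Vnode n -> F) a0 b1 :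
  (forall c, \sum_e A c e * s e = 0) -> (forall d, \sum_e B d e * w e = 0) ->
  (forall a e, val e = hedge a b1 -> s e = 0) ->
  (forall b e, val e = vedge a0 b -> s e = 0) ->
  \sum_e s e * w e = 0.
Proof.
move=> As0 Bw0 cut_h cut_v.
have sw e : s e * w e = s e * gauged w a0 b1 e + s e * \sum_c gauge w a0 b1 c * A c e.
  by rewrite /gauged mulrBr subrK.
rewrite (eq_bigr _ (fun e _ => sw e)) big_split /= dot_ker_image // addr0.
apply: big1 => e _; have [-> | /(gauged_on_cut Bw0)] := eqVneq (gauged w a0 b1 e) 0.
  by rewrite mulr0.
by case=> [[a /cut_h] | [b /cut_v]] ->; rewrite mul0r.
Qed.

Lemma light_codeword_orth (s : {ffun Vnode n -> F}) (w : Vnode n -> F) :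
  (forall c, \sum_e A c e * s e = 0) -> (forall d, \sum_e B d e * w e = 0) ->
  (wt s < n)%N -> \sum_e s e * w e = 0.
Proof.
move=> As0 Bw0 /(light_word_misses_lines n_gt1 tr) [[b1 cut_h] [a0 cut_v]].
exact: dot_eq0_of_cut cut_h cut_v.
Qed.

Section LineWord.

Definition row_ratio k :=
  A (vtxc 0 k.+1) (hedgeV 0 k) / A (vtxc 0 k.+1) (hedgeV 0 k.+1).
Definition row_value k := \prod_(j < k) row_ratio j.

(* Consecutive values along the row are in the ratio of the labels of the check
   between them, so each check of the row receives two equal contributions,
   which cancel in characteristic 2. *)
Definition line_word : {ffun Vnode n -> F} :=
  [ffun e => \sum_(k < n) if e == hedgeV 0 k then row_value k else 0].

Lemma line_wordE (k : 'I_n) : line_word (hedgeV 0 k) = row_value k.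
Proof.
rewrite ffunE (bigD1 k) //= eqxx big1 ?addr0 // => k' ne.
by rewrite hedgeV0_eq eq_sym (negbTE ne).
Qed.

Lemma line_word_off e : (forall k : 'I_n, e != hedgeV 0 k) -> line_word e = 0.
Proof. by move=> off; rewrite ffunE big1 // => k _; rewrite (negbTE (off k)). Qed.

Lemma line_word_supp e : line_word e != 0 -> exists k : 'I_n, e = hedgeV 0 k.
Proof.
case: (pickP (fun k : 'I_n => e == hedgeV 0 k)) => [k /eqP -> | off]; first by exists k.
by rewrite line_word_off ?eqxx // => k; rewrite off.
Qed.

Lemma line_word00 : line_word (hedgeV 0 0) = 1.
Proof. by rewrite (line_wordE (Ordinal (ltnW n_gt1))) /row_value big_ord0. Qed.

Lemma row_value_neq0 k : row_value k != 0.
Proof.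
apply/prodf_neq0 => j _; have [_ nzA _ _] := A_vtxc_edges 0 j.
by have [nzA' _ _ _] := A_vtxc_edges 0 j.+1; rewrite mulf_neq0 ?invr_neq0.
Qed.

Lemma wt_line_word : wt line_word = n.
Proof.
rewrite /wt; have -> : [set e | line_word e != 0] = [set hedgeV 0 k | k : 'I_n].
  apply/setP => e; rewrite inE; apply/idP/imsetP => [/line_word_supp [k ->] | [k _ ->]].
    by exists k.
  by rewrite line_wordE row_value_neq0.
by rewrite card_imset ?card_ord // => k k' /eqP; rewrite hedgeV0_eq => /eqP.
Qed.

Lemma line_word_dot c :
  \sum_e A c e * line_word e = \sum_(k < n) A c (hedgeV 0 k) * row_value k.
Proof.
rewrite (eq_bigr (fun e =>
  \sum_(k < n) if e == hedgeV 0 k then A c e * row_value k else 0)).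
  rewrite exchange_big; apply: eq_bigr => k _.
  by rewrite -big_mkcond big_pred1_eq.
by move=> e _; rewrite ffunE mulr_sumr; apply: eq_bigr => k _; case: eqP; rewrite ?mulr0.
Qed.

Hypothesis char2 : (2 : F) = 0.
Hypothesis row_value_n : row_value n = 1.

Lemma line_word_ker c : \sum_e A c e * line_word e = 0.
Proof.
have n_gt0 : (0 < n)%N := ltnW n_gt1.
rewrite line_word_dot; have [a [b cE]] := cpos_vtx c.
have [a_row0 | a_n0] := eqVneq (a %% n)%N 0; last first.
  rewrite big1 // => k _; have [-> | ] := eqVneq (A c (hedgeV 0 k)) 0; first by rewrite mul0r.
  move/vtxc_hedge_ends; rewrite -!(inj_eq cpos_inj) cE !vtxcE !vtx_eq mod0n.
  by rewrite (negbTE a_n0).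
pose j := ((b + n.-1) %% n)%N; have lt_jn : (j < n)%N := ltn_pmod _ n_gt0.
have -> : c = vtxc 0 j.+1.
  apply: cpos_inj; rewrite cE vtxcE; apply/eqP; rewrite vtx_eq a_row0 mod0n eqxx /=.
  by rewrite -addn1 modnDml -addnA addn1 prednK // modnDr.
have lt_j1n : (j.+1 %% n < n)%N := ltn_pmod _ n_gt0.
rewrite (@big_supp2 _ _ _ (Ordinal lt_jn) (Ordinal lt_j1n)) /=.
- have valS : row_value (j.+1 %% n) = row_value j * row_ratio j.
    case: (ltnP j.+1 n) => [lt | ge]; first by rewrite modn_small // /row_value big_ord_recr.
    have eq : j.+1 = n by apply/eqP; rewrite eqn_leq ge lt_jn.
    by rewrite eq modnn /row_value big_ord0 -{1}row_value_n -eq /row_value big_ord_recr.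
  have [nzA _ _ _] := A_vtxc_edges 0 j.+1.
  rewrite hedgeV_modr valS /row_ratio.
  set A1 := A _ (hedgeV 0 j); set A2 := A _ (hedgeV 0 j.+1).
  have -> : A2 * (row_value j * (A1 / A2)) = A1 * row_value j by field.
  by rewrite -mulr2n -mulr_natr char2 mulr0.
- by rewrite -val_eqE /= -{1}(modn_small lt_jn) eqn_modSr.
- move=> k; rewrite mulf_eq0 negb_or => /andP [/vtxc_hedge_ends + _].
  rewrite -!(inj_eq cpos_inj) !vtxcE !vtx_eq !eqxx /= -!val_eqE /=.
  case/orP => [ek | ekS]; apply/orP; [right | left].
  + by rewrite -[k : nat](modn_small (ltn_ord k)) eq_sym.
  + by move: ekS; rewrite eqn_modS !modn_small // eq_sym.
Qed.

End LineWord.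

Lemma row_product_one : cycles_product_one cpos A -> row_value n = 1.
Proof.
move=> cyc; have hS (t : 'I_n) : hedgeV 0 (ordS t) = hedgeV 0 t.+1 by exact: hedgeV_modr.
rewrite -[LHS]invrK /row_value -prodfV; under eq_bigr do rewrite invf_div -hS.
rewrite cyc ?invr1 //.
- by move=> t t' /eqP; rewrite hedgeV0_eq => /eqP.
- move=> t t' /eqP; rewrite -(inj_eq cpos_inj) !vtxcE vtx_eq eqxx eqn_modS.
  by rewrite !modn_small // => /eqP /val_inj.
- by move=> t; rewrite vtxcE; case: (vtx_adj_edges n_gt1 tr 0 t).
- by move=> t; rewrite vtxcE hS; case: (vtx_adj_edges n_gt1 tr 0 t.+1).
Qed.

End Labelings.

Lemma codeP n (C : finType) (F : finFieldType) (H : C -> Vnode n -> F)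
    (x : {ffun Vnode n -> F}) :
  reflect (forall c, \sum_v H c v * x v = 0) (x \in code H).
Proof. by rewrite inE; apply: (iffP forallP) => Hx c; apply/eqP. Qed.

Lemma dualP n (F : finFieldType) (S : {set {ffun Vnode n -> F}})
    (y : {ffun Vnode n -> F}) :
  reflect (forall x, x \in S -> \sum_v x v * y v = 0) (y \in dual S).
Proof. by rewrite inE; apply: (iffP forall_inP) => Hy x /Hy /eqP. Qed.

Lemma dual_code_sub_orth n (C D : finType) (F : finFieldType)
    (HA : C -> Vnode n -> F) (HB : D -> Vnode n -> F) :
  dual (code HB) \subset code HA -> forall c d, \sum_v HA c v * HB d v = 0.
Proof.
move=> sub c d; have rowB : [ffun v => HB d v] \in dual (code HB).
  apply/dualP => x /codeP/(_ d) Bx; rewrite -[RHS]Bx.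
  by apply: eq_bigr => v _; rewrite ffunE mulrC.
by move/subsetP/(_ _ rowB)/codeP/(_ c): sub; under eq_bigr do rewrite ffunE.
Qed.

Lemma min_nondual_weight n (F : finFieldType) (C D : finType)
    (HA : C -> Vnode n -> F) (HB : D -> Vnode n -> F) (x0 z0 : {ffun Vnode n -> F}) :
  (forall c, \sum_e HA c e * x0 e = 0) -> (forall d, \sum_e HB d e * z0 e = 0) ->
  wt x0 = n -> \sum_e z0 e * x0 e != 0 ->
  (forall (x : {ffun Vnode n -> F}) (z : Vnode n -> F),
     (forall c, \sum_e HA c e * x e = 0) -> (forall d, \sum_e HB d e * z e = 0) ->
     (wt x < n)%N -> \sum_e x e * z e = 0) ->
  (exists2 x, x \in code HA :\: dual (code HB) & wt x = n) /\
  (forall x, x \in code HA :\: dual (code HB) -> (n <= wt x)%N).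
Proof.
move=> x0A z0B wt_x0 z0x0 light; split.
  exists x0 => //; apply/setDP; split; first exact/codeP.
  by apply/dualP => /(_ z0 (introT (codeP _ _) z0B)); apply/eqP.
move=> x /setDP [/codeP xA /dualP xnB]; rewrite leqNgt; apply/negP => wt_lt.
apply: xnB => z /codeP zB; rewrite -[RHS](light x z xA zB wt_lt).
by apply: eq_bigr => v _; exact: mulrC.
Qed.

Lemma line_words_dot n (n_gt1 : (1 < n)%N) (F : fieldType) (C C' : finType)
    (A : C -> Vnode n -> F) (A' : C' -> Vnode n -> F) vtxc vtxc' :
  \sum_e line_word n_gt1 true A' vtxc' e * line_word n_gt1 false A vtxc e = 1.
Proof.
rewrite (big_supp1 (i0 := hedgeV n_gt1 false 0 0)) => [|e ne].
  by rewrite line_word00 -hedgeV_transpose line_word00 mulr1.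
have [-> | /line_word_supp [k' eE']] := eqVneq (line_word n_gt1 true A' vtxc' e) 0.
  by rewrite mul0r.
have [-> | /line_word_supp [k eE]] := eqVneq (line_word n_gt1 false A vtxc e) 0.
  by rewrite mulr0.
suff : e = hedgeV n_gt1 false 0 0 by move/eqP; rewrite (negbTE ne).
apply: val_inj; rewrite eE; apply: (hedge_row_meets_col (k' := k')).
by rewrite -[LHS]/(val (hedgeV n_gt1 false 0 k)) -eE eE'.
Qed.

Lemma row_value_transpose n (n_gt1 : (1 < n)%N) (F : fieldType)
    (HZ : CZnode n -> Vnode n -> F) :
  row_value n_gt1 true HZ (cz_vtx n_gt1) n =
  \prod_(k < n) (HZ (cz_face n_gt1 k 0) (hedgeV n_gt1 false k 0) /
                 HZ (cz_face n_gt1 k 0) (hedgeV n_gt1 false k.+1 0)).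
Proof. by apply: eq_bigr => k _; rewrite /row_ratio cz_vtx_face !hedgeV_transpose. Qed.

Theorem lemma5 (n m : nat) (F : finFieldType)
  (HX : CXnode n -> Vnode n -> F) (HZ : CZnode n -> Vnode n -> F) :
  (2 <= n)%N ->
  #|F| = (2 ^ m)%N ->
  is_labeling (@cxpos n) HX ->
  is_labeling (@czpos n) HZ ->
  dual (code HZ) \subset code HX ->
  cycles_product_one (@cxpos n) HX ->
  ((exists2 x, x \in code HX :\: dual (code HZ) & wt x = n) /\
   (forall x, x \in code HX :\: dual (code HZ) -> (n <= wt x)%N)) /\
  ((exists2 x, x \in code HZ :\: dual (code HX) & wt x = n) /\
   (forall x, x \in code HZ :\: dual (code HX) -> (n <= wt x)%N)).
Proof.
move=> n_gt1 cardF HX_lab HZ_lab dual_sub HX_cyc.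
have char2 : (2 : F) = 0 := pcharf0 (card_finPcharP cardF (isT : prime 2)).
have orthXZ := dual_code_sub_orth dual_sub.
have orthZX d c : \sum_e HZ d e * HX c e = 0.
  by rewrite -[RHS](orthXZ c d); apply: eq_bigr => e _; rewrite mulrC.
have cx_inj : injective (@cxpos n) by move=> c c' /val_inj.
have cz_inj : injective (@czpos n) by move=> c c' /val_inj.
have cxE a b : cxpos (cx_vtx n_gt1 a b) = vtx n_gt1 false a b by [].
have czE a b : czpos (cz_vtx n_gt1 a b) = vtx n_gt1 true a b by [].
have czfE a b : czpos (cz_face n_gt1 a b) = face n_gt1 false a b by [].
have cxfE a b : cxpos (cx_face n_gt1 a b) = face n_gt1 true a b by [].
have x_row := row_product_one cx_inj cxE HX_cyc.
have z_row := face_row_product_one HX_lab HZ_lab cx_inj cxE czfE orthXZ HX_cyc.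
rewrite -row_value_transpose in z_row.
have x0X := line_word_ker HX_lab cx_inj (@cx_vtx_onto _ n_gt1) cxE char2 x_row.
have z0Z := line_word_ker HZ_lab cz_inj (@cz_vtx_onto _ n_gt1) czE char2 z_row.
have z0x0 := line_words_dot n_gt1 HX HZ (cx_vtx n_gt1) (cz_vtx n_gt1).
have x0z0 : \sum_e line_word n_gt1 false HX (cx_vtx n_gt1) e *
               line_word n_gt1 true HZ (cz_vtx n_gt1) e = 1.
  by rewrite -[RHS]z0x0; apply: eq_bigr => e _; exact: mulrC.
split.
  apply: (min_nondual_weight x0X z0Z); first by have := wt_line_word HX_lab cxE.
    by rewrite z0x0 oner_neq0.
  by have := light_codeword_orth HX_lab HZ_lab cx_inj (@cx_vtx_onto _ n_gt1) cxE czfE orthXZ.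
apply: (min_nondual_weight z0Z x0X); first by have := wt_line_word HZ_lab czE.
  by rewrite x0z0 oner_neq0.
by have := light_codeword_orth HZ_lab HX_lab cz_inj (@cz_vtx_onto _ n_gt1) czE cxfE orthZX.
Qed.
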